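(* Let $P,Q$ be nonzero coprime integers with $\Delta:=P^2-4Q\neq0$, such that $\alpha/\beta$ is not a root of unity, where $\alpha,\beta$ are the roots of $x^2-Px+Q$. Let $(U_n)$ be the Lucas sequence $U_n=(\alpha^n-\beta^n)/(\alpha-\beta)$. Then for all positive integers $n,k$ with $n\ge k$, \[\mathrm{lcm}\left\{\binom{n}{m}_{\boldsymbol U}:\ 1\le m\le k\right\}=\frac{\mathrm{lcm}(U_{n+1},U_n,\dots,U_{n-k+1})}{|U_{n+1}|}.\]
   Context: $U_0=0$, $U_1=1$, $U_{n+2}=PU_{n+1}-QU_n$. For $n\ge k\ge1$, $\binom{n}{k}_{\boldsymbol U}:=\frac{U_nU_{n-1}\cdots U_{n-k+1}}{U_1U_2\cdots U_k}$. *)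

From HB Require Import structures.
From mathcomp Require Import all_boot all_order all_algebra all_field.
Set Implicit Arguments. Unset Strict Implicit. Unset Printing Implicit Defensive.
Import Order.TTheory GRing.Theory Num.Theory.
Local Open Scope ring_scope.

Fixpoint lucas_aux (P Q : int) (n : nat) : int * int :=
  match n with
  | O => (0, 1)
  | S m => let: (a, b) := lucas_aux P Q m in (b, P * b - Q * a)
  end.
Definition lucasU (P Q : int) (n : nat) : int := (lucas_aux P Q n).1.

(* It is a classical fact that this quotient is an integer; we define it by
   integer division (exact in the situation of the theorem). *)
Definition lucasnomial (P Q : int) (n k : nat) : int :=
  divz (\prod_(0 <= i < k) lucasU P Q (n - i)%N)
       (\prod_(1 <= i < k.+1) lucasU P Q i).

Definition lcmz_seq (s : seq int) : int := foldr lcmz 1 s.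

(* Fix a prime p and put e(j) = v_p(|U_j|). Strong divisibility,
   gcd(U_a, U_b) = +-U_(gcd(a, b)), gives e(gcd(a, b)) = min(e(a), e(b)), so for
   every level t the indices j with e(j) >= t are exactly the multiples of a rank
   r_t. Counting multiples of r_t in the windows (n - m, n] and (0, m], as in
   Kummer's theorem, shows that v_p of the Lucasnomial [n, m] is the number of
   levels t at which adding m and n - m modulo r_t produces a carry; in
   particular the Lucasnomials are integers. The maximum of these carry counts
   over 1 <= m <= k equals max_(i <= k) e(n + 1 - i) - e(n + 1), which is the
   lcm identity at the prime p. *)

From HB Require Import structures.
From mathcomp Require Import all_boot all_order all_algebra all_field.
From mathcomp Require Import ring zify.
Import Order.TTheory GRing.Theory Num.Theory.

Set Implicit Arguments.
Unset Strict Implicit.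
Unset Printing Implicit Defensive.

Lemma leq_modnD_dvdS r x y : 0 < r -> r %| x.+1 -> ~~ (r %| x.+1 + y) ->
  r <= x %% r + y %% r.
Proof.
move=> r_gt0 /dvdnP [q def_x] r_ndvd.
have x_mod : x %% r = r.-1.
  have q_gt0 : 0 < q by case: q def_x.
  have -> : x = q.-1 * r + r.-1 by move: def_x; case: q q_gt0 => // q _; rewrite mulSn; lia.
  by rewrite modnMDl modn_small // prednK.
have : y %% r != 0.
  apply: contra r_ndvd => /eqP y_mod; rewrite def_x dvdn_addr ?dvdn_mull //.
  by rewrite /dvdn y_mod.
lia.
Qed.

Lemma ltn_modnD_dvdS r x y : 0 < r -> r %| (x + y).+1 -> x %% r + y %% r < r.
Proof.
move=> r_gt0 r_dvd.
have : r %| (x %% r + y %% r).+1.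
  move: r_dvd; rewrite {1}(divn_eq x r) {1}(divn_eq y r).
  have -> : (x %/ r * r + x %% r + (y %/ r * r + y %% r)).+1
            = (x %/ r + y %/ r) * r + (x %% r + y %% r).+1 by lia.
  by rewrite dvdn_addr // dvdn_mull.
have := ltn_pmod x r_gt0; have := ltn_pmod y r_gt0.
by move=> ? ? /dvdnP [[|[|q]] def_s]; rewrite ?mulSn ?mul0n in def_s; lia.
Qed.

Lemma ltn_divnD_mul r x y : 0 < r -> r <= x %% r + y %% r -> x < (x + y) %/ r * r.
Proof.
move=> r_gt0 carry; rewrite divnD // carry.
apply: leq_trans (ltn_ceil x r_gt0) _.
by rewrite leq_mul2r addn1 ltnS leq_addr orbT.
Qed.

Lemma sum_dvdn_nat r x y : 0 < r ->
  \sum_(x.+1 <= j < (x + y).+1) (r %| j : nat) = (x + y) %/ r - x %/ r.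
Proof.
move=> r_gt0; elim: y => [|y IHy]; first by rewrite addn0 big_geq ?subnn.
rewrite addnS big_nat_recr /= ?ltnS ?leq_addr // IHy (divnS _ r_gt0).
have : x %/ r <= (x + y) %/ r by apply: leq_div2r; apply: leq_addr.
lia.
Qed.

Lemma sum_ord_itv_indicator a b B : b <= B ->
  \sum_(t < B) ((a <= t) && (t < b) : nat) = b - a.
Proof.
suff -> : \sum_(t < B) ((a <= t) && (t < b) : nat) = minn B b - a by lia.
elim: B => [|B IHB]; first by rewrite big_ord0 min0n.
rewrite big_ord_recr /= IHB.
by case: (leqP a B) => ?; case: (ltnP B b) => ? /=; lia.
Qed.

Lemma sum_nat_rev (f : nat -> nat) n m : m <= n ->
  \sum_(0 <= i < m) f (n - i) = \sum_((n - m).+1 <= j < n.+1) f j.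
Proof.
elim: m => [|m IHm] lt_mn; first by rewrite subn0 !big_geq.
rewrite big_nat_recr //= IHm 1?ltnW // [in RHS](@big_ltn _ _ _ (n - m.+1).+1); last lia.
have -> : (n - m.+1).+1 = n - m by lia.
by rewrite addnC.
Qed.

Section GcdMinValuation.

Variables (e : nat -> nat) (n : nat).
Local Notation N := n.+1.
Hypothesis e_gcd : forall a b, 0 < a <= N -> 0 < b <= N ->
  e (gcdn a b) = minn (e a) (e b).

(* The least j in [1, N] with t <= e j, or N.+1 when there is none. *)
Definition rank t := (find (fun j => t <= e j) (iota 1 N)).+1.

Lemma rank_gt0 t : 0 < rank t. Proof. by []. Qed.

Lemma leq_e_rank t : rank t <= N -> t <= e (rank t).
Proof.
move=> rank_le; have found : has (fun j => t <= e j) (iota 1 N).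
  by rewrite has_find size_iota.
by have := nth_find 0 found; rewrite nth_iota.
Qed.

Lemma rank_min t j : 0 < j <= N -> t <= e j -> rank t <= j.
Proof.
case/andP=> j_gt0 j_leN le_t_ej; rewrite leqNgt; apply/negP => lt_j_rank.
have := @before_find _ 0 (fun j => t <= e j) (iota 1 N) j.-1.
by rewrite nth_iota ?add1n ?prednK ?le_t_ej //; move/(_ lt_j_rank).
Qed.

Lemma rank_dvdn t j : 0 < j <= N -> (t <= e j) = (rank t %| j).
Proof.
move=> j_itv; have /andP [j_gt0 j_leN] := j_itv.
apply/idP/idP => [le_t_ej | rank_dvd].
  have le_rank_j := rank_min j_itv le_t_ej.
  have rank_itv : 0 < rank t <= N by rewrite rank_gt0 (leq_trans le_rank_j).
  have le_g_rank : gcdn (rank t) j <= rank t by rewrite dvdn_leq ?dvdn_gcdl.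
  have : rank t <= gcdn (rank t) j.
    apply: rank_min; first by rewrite gcdn_gt0 rank_gt0 /= (leq_trans le_g_rank) ?leq_trans.
    by rewrite e_gcd // leq_min le_t_ej leq_e_rank // (leq_trans le_rank_j).
  by move=> le_rank_g; apply/gcdn_idPl/eqP; rewrite eqn_leq le_g_rank.
have rank_le : rank t <= N by rewrite (leq_trans (dvdn_leq j_gt0 rank_dvd)).
have rank_itv : 0 < rank t <= N by rewrite rank_gt0.
by rewrite (leq_trans (leq_e_rank rank_le)) // -{1}(gcdn_idPl rank_dvd) e_gcd // geq_minr.
Qed.

Definition emax := \max_(j < N.+1) e j.

Lemma leq_emax j : j <= N -> e j <= emax.
Proof.
by move=> j_le; apply: (@leq_bigmax _ (fun j : 'I_N.+1 => e j) (Ordinal (j_le : j < N.+1))).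
Qed.

Lemma e_sum_rank j : 0 < j <= N -> e j = \sum_(t < emax) (rank t.+1 %| j : nat).
Proof.
move=> /andP [j_gt0 j_leN]; rewrite -[e j]subn0 -(sum_ord_itv_indicator 0 (leq_emax j_leN)).
by apply: eq_bigr => t _; rewrite -rank_dvdn ?j_gt0.
Qed.

Definition carry m t := rank t.+1 <= (n - m) %% rank t.+1 + m %% rank t.+1.
Definition carries m := \sum_(t < emax) (carry m t : nat).

Lemma kummer_carries m : m <= n ->
  \sum_((n - m).+1 <= j < N) e j = \sum_(1 <= j < m.+1) e j + carries m.
Proof.
move=> le_mn; set F := fun j => \sum_(t < emax) (rank t.+1 %| j : nat).
rewrite (eq_big_nat _ _ (F2 := F)) => [|j j_itv]; last by apply: e_sum_rank; lia.
rewrite [\sum_(1 <= j < _) _](eq_big_nat _ _ (F2 := F)) => [|j j_itv]; last first.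
  by apply: e_sum_rank; lia.
rewrite exchange_big [X in X + _]exchange_big /carries -big_split /=.
apply: eq_bigr => t _; have r_gt0 := rank_gt0 t.+1.
have := sum_dvdn_nat (n - m) m r_gt0; rewrite subnK // => ->.
have := sum_dvdn_nat 0 m r_gt0; rewrite add0n => ->.
have := divnD (n - m) m r_gt0; rewrite subnK // /carry => ->.
by rewrite div0n subn0 -addnA addKn.
Qed.

Lemma e_sub_le_carries i : 0 < i <= n -> e (N - i) <= carries i + e N.
Proof.
move=> i_itv.
suff : e (N - i) - e N <= carries i by lia.
rewrite -(sum_ord_itv_indicator (e N) (leq_emax (leq_subr i N))).
apply: leq_sum => t _; case: andP => //= -[le_eN_t lt_t_e].
have dvd_low : rank t.+1 %| (n - i).+1 by rewrite -rank_dvdn -?subSn //; lia.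
have ndvd_top : ~~ (rank t.+1 %| (n - i).+1 + i).
  have -> : (n - i).+1 + i = N by lia.
  by rewrite -rank_dvdn -?ltnNge //; lia.
by rewrite lt0b; apply: leq_modnD_dvdS.
Qed.

Lemma carries_le_max m : 0 < m <= n ->
  carries m + e N <= maxn (\max_((n - m).+1 <= j < N) e j) (e N).
Proof.
move=> m_itv; have le_mn : m <= n by case/andP: m_itv.
set M := \max_(_ <= j < _) e j.
have le_M_emax : M <= emax.
  by apply/bigmax_leqP_seq => j; rewrite mem_index_iota => j_itv _; apply: leq_emax; lia.
suff : carries m <= M - e N by lia.
rewrite -(sum_ord_itv_indicator (e N) le_M_emax); apply: leq_sum => t _.
case carry_t : (carry m t) => //=; rewrite lt0b; apply/andP; split.
  rewrite leqNgt; apply/negP => lt_t_eN.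
  have dvd_top : rank t.+1 %| (n - m + m).+1 by rewrite subnK // -rank_dvdn //; lia.
  by move: carry_t; rewrite /carry leqNgt ltn_modnD_dvdS.
have := ltn_divnD_mul (rank_gt0 t.+1) carry_t; rewrite subnK //.
set j := n %/ rank t.+1 * rank t.+1 => lt_nm_j.
have le_jn : j <= n by apply: leq_divM.
have : t.+1 <= e j by rewrite rank_dvdn ?dvdn_mull //; lia.
by move/leq_trans; apply; apply: leq_bigmax_seq => //; rewrite mem_index_iota; lia.
Qed.

Lemma max_carries k : 0 < k <= n ->
  \max_(m <- iota 1 k) carries m + e N = \max_(i <- iota 0 k.+1) e (N - i).
Proof.
move=> k_itv; set ME := \max_(i <- iota 0 k.+1) e (N - i).
have le_e_ME i : i <= k -> e (N - i) <= ME.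
  by move=> le_ik; apply: (leq_bigmax_seq (F := fun i => e (N - i))); rewrite ?mem_iota; lia.
apply/eqP; rewrite eqn_leq; apply/andP; split.
  suff : \max_(m <- iota 1 k) carries m <= ME - e N.
    by have := le_e_ME 0 (leq0n k); rewrite subn0; lia.
  apply/bigmax_leqP_seq => m; rewrite mem_iota => m_itv _.
  have le_window_ME : \max_((n - m).+1 <= j < N) e j <= ME.
    apply/bigmax_leqP_seq => j; rewrite mem_index_iota => j_itv _.
    have -> : j = N - (N - j) by lia.
    by apply: le_e_ME; lia.
  have m_itv' : 0 < m <= n by lia.
  by have := carries_le_max m_itv'; have := le_e_ME 0 (leq0n k); rewrite subn0; lia.
apply/bigmax_leqP_seq => -[_ _ | i]; first by rewrite subn0 leq_addl.
rewrite mem_iota => i_itv _.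
have i_itv' : 0 < i.+1 <= n by lia.
apply: leq_trans (e_sub_le_carries i_itv') _.
by rewrite leq_add2r; apply: (leq_bigmax_seq (F := carries)); rewrite ?mem_iota; lia.
Qed.

End GcdMinValuation.

Lemma logn_prod (I : eqType) p (r : seq I) (F : I -> nat) :
  (forall i, i \in r -> 0 < F i) ->
  logn p (\prod_(i <- r) F i) = \sum_(i <- r) logn p (F i).
Proof.
move=> F_gt0; rewrite big_seq [RHS]big_seq.
suff [] : 0 < \prod_(i <- r | i \in r) F i /\
          logn p (\prod_(i <- r | i \in r) F i) = \sum_(i <- r | i \in r) logn p (F i) by [].
elim/big_rec2: _ => [|i a b /F_gt0 Fi_gt0 [a_gt0 <-]]; first by rewrite logn1.
by rewrite muln_gt0 Fi_gt0 a_gt0 lognM.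
Qed.

Lemma logn_biglcm (I : eqType) p (r : seq I) (F : I -> nat) :
  (forall i, i \in r -> 0 < F i) ->
  logn p (\big[lcmn/1]_(i <- r) F i) = \max_(i <- r) logn p (F i).
Proof.
move=> F_gt0; rewrite big_seq [RHS]big_seq.
suff [] : 0 < \big[lcmn/1]_(i <- r | i \in r) F i /\
          logn p (\big[lcmn/1]_(i <- r | i \in r) F i) = \max_(i <- r | i \in r) logn p (F i) by [].
elim/big_rec2: _ => [|i a b /F_gt0 Fi_gt0 [a_gt0 <-]]; first by rewrite logn1.
by rewrite lcmn_gt0 Fi_gt0 a_gt0 logn_lcm.
Qed.

Lemma biglcmn_gt0 (I : eqType) (r : seq I) (F : I -> nat) :
  (forall i, i \in r -> 0 < F i) -> 0 < \big[lcmn/1]_(i <- r) F i.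
Proof.
move=> F_gt0; rewrite big_seq.
by elim/big_rec: _ => // i a /F_gt0 Fi_gt0 a_gt0; rewrite lcmn_gt0 Fi_gt0.
Qed.

Lemma dvdn_from_log d m : 0 < d -> 0 < m -> (forall p, logn p d <= logn p m) -> d %| m.
Proof.
move=> d_gt0 m_gt0 le_log; apply/gcdn_idPl/eqn_from_log; rewrite ?gcdn_gt0 ?d_gt0 //.
by move=> p; rewrite logn_gcd //; apply/minn_idPl.
Qed.

Lemma lcmz_seqE (s : seq int) : lcmz_seq s = (\big[lcmn/1]_(x <- s) `|x|)%N.
Proof. by elim: s => [|x s IHs]; rewrite ?big_nil ?big_cons //= /lcmz IHs. Qed.

Local Open Scope ring_scope.

Section LucasSequence.

Variables P Q : int.
Local Notation U := (lucasU P Q).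

Lemma lucas_auxE n : lucas_aux P Q n = (U n, U n.+1).
Proof. by elim: n => [//|n IHn]; rewrite /= IHn /lucasU /= IHn. Qed.

Lemma lucasU0 : U 0 = 0. Proof. by []. Qed.
Lemma lucasU1 : U 1 = 1. Proof. by []. Qed.

Lemma lucasUSS n : U n.+2 = P * U n.+1 - Q * U n.
Proof. by rewrite {1}/lucasU /= lucas_auxE. Qed.

Lemma lucasUD m n : U (m + n).+1 = U m.+1 * U n.+1 - Q * U m * U n.
Proof.
suff [] : U (m + n).+1 = U m.+1 * U n.+1 - Q * U m * U n /\
          U (m + n.+1).+1 = U m.+1 * U n.+2 - Q * U m * U n.+1 by [].
elim: n => [|n [IH0 IH1]].
  by rewrite addn0 addn1 lucasUSS (lucasUSS 0) lucasU0 lucasU1; split; ring.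
split; first exact: IH1.
by rewrite addnS lucasUSS IH1 addnS IH0 [U n.+3]lucasUSS [U n.+2]lucasUSS; ring.
Qed.

Lemma binet (R : comPzRingType) (alpha beta : R) :
    alpha + beta = P%:~R -> alpha * beta = Q%:~R ->
  forall n, (U n)%:~R * (alpha - beta) = alpha ^+ n - beta ^+ n.
Proof.
move=> sum_ab prod_ab n.
suff [] : (U n)%:~R * (alpha - beta) = alpha ^+ n - beta ^+ n /\
          (U n.+1)%:~R * (alpha - beta) = alpha ^+ n.+1 - beta ^+ n.+1 by [].
elim: n => [|n [IH0 IH1]].
  by rewrite lucasU0 lucasU1 !expr0 !expr1 subrr mul0r mul1r.
split=> //; rewrite lucasUSS intrB !intrM mulrBl -!mulrA IH0 IH1 -sum_ab -prod_ab.
by rewrite !exprS; ring.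
Qed.

Lemma lucasUS_neq0 (F : fieldType) (alpha beta : F) :
    alpha + beta = P%:~R -> alpha * beta = Q%:~R -> beta != 0 ->
    (forall m, (0 < m)%N -> (alpha / beta) ^+ m != 1) ->
  forall n, U n.+1 != 0.
Proof.
move=> sum_ab prod_ab beta_neq0 not_root n.
apply: contra (not_root _ (ltn0Sn n)) => /eqP Un0.
have := binet sum_ab prod_ab n.+1; rewrite Un0 mul0r => /esym/eqP.
by rewrite subr_eq0 expr_div_n => /eqP ->; rewrite divff ?expf_neq0.
Qed.

Hypothesis coPQ : coprimez P Q.

Lemma coprimez_Q_lucasUS n : coprimez Q (U n.+1).
Proof.
elim: n => [|n IHn]; first by rewrite lucasU1 /coprimez /gcdz gcdn1.
have -> : U n.+2 = (- U n) * Q + P * U n.+1 by rewrite lucasUSS; ring.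
by rewrite /coprimez gcdzMDl -/(coprimez _ _) coprimezMr IHn andbT coprimez_sym.
Qed.

Lemma coprimez_lucasUS n : coprimez (U n) (U n.+1).
Proof.
elim: n => [|n IHn]; first by rewrite lucasU0 lucasU1 /coprimez /gcdz gcd0n.
have -> : U n.+2 = P * U n.+1 + (- (Q * U n)) by rewrite lucasUSS.
rewrite /coprimez gcdzMDl -/(coprimez _ _) coprimezN coprimezMr.
by rewrite coprimez_sym coprimez_Q_lucasUS coprimez_sym.
Qed.

Lemma gcdz_lucasUDS m n : gcdz (U n.+1) (U (m + n).+1) = gcdz (U n.+1) (U m).
Proof.
rewrite lucasUD gcdzMDl.
have -> : - (Q * U m * U n) = - (Q * U n) * U m by ring.
rewrite Gauss_gcdzr // coprimezN coprimezMr coprimez_sym coprimez_Q_lucasUS.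
by rewrite coprimez_sym coprimez_lucasUS.
Qed.

Lemma gcdz_lucasU a b : gcdz (U a) (U b) = `|U (gcdn a b)|%:Z.
Proof.
elim: {a b}(a + b)%N {-2}a {-2}b (leqnn (a + b)) => [|s IHs] [|a] [|b] //=;
  rewrite ?gcd0n ?gcdn0 ?lucasU0 ?gcd0z ?gcdz0 // => le_ab_s.
case: (leqP b a) => [le_ba | lt_ab].
  rewrite -(subnK le_ba) gcdzC gcdz_lucasUDS IHs; last by lia.
  by rewrite [gcdn _ b.+1]gcdnC -addnS gcdnDr.
rewrite -(subnK (ltnW lt_ab)) gcdz_lucasUDS IHs; last by lia.
by rewrite -addnS gcdnDr.
Qed.

End LucasSequence.

Section LucasnomialValuation.

Variables (P Q : int) (n : nat).
Local Notation U := (lucasU P Q).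
Hypothesis coPQ : coprimez P Q.
Hypothesis UnS_neq0 : forall j, U j.+1 != 0.

Local Notation e p := (fun j => logn p `|U j|).

Lemma absz_lucasU_gt0 j : (0 < j)%N -> (0 < `|U j|)%N.
Proof. by case: j => // j _; rewrite absz_gt0. Qed.

Lemma logn_lucasU_gcd p a b : (0 < a)%N -> (0 < b)%N ->
  e p (gcdn a b) = minn (e p a) (e p b).
Proof.
move=> a_gt0 b_gt0; have := gcdz_lucasU coPQ a b; rewrite /gcdz => -[<-].
by rewrite logn_gcd // absz_lucasU_gt0.
Qed.

Lemma absz_prod (I : Type) (r : seq I) (F : I -> int) :
  absz (\prod_(i <- r) F i) = (\prod_(i <- r) absz (F i))%N.
Proof. exact: (big_morph absz abszM (erefl (absz 1))). Qed.

Lemma prod_lucasU_gt0 m : (0 < \prod_(1 <= i < m.+1) `|U i|)%N.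
Proof. by rewrite big_nat prodn_cond_gt0 // => i /andP [/absz_lucasU_gt0]. Qed.

Lemma prod_lucasU_falling_gt0 m : (m <= n)%N -> (0 < \prod_(0 <= i < m) `|U (n - i)|)%N.
Proof. by move=> le_mn; rewrite big_nat prodn_cond_gt0 // => i ?; apply: absz_lucasU_gt0; lia. Qed.

Lemma logn_lucas_falling p m : (m <= n)%N ->
  logn p (\prod_(0 <= i < m) `|U (n - i)|) =
  (logn p (\prod_(1 <= i < m.+1) `|U i|) + carries (e p) n m)%N.
Proof.
move=> le_mn; rewrite !logn_prod => [|i|i]; rewrite ?mem_index_iota.
- rewrite (sum_nat_rev (e p)) // kummer_carries // => a b /andP [a_gt0 _] /andP [b_gt0 _].
  exact: logn_lucasU_gcd.
- by move=> /andP [/absz_lucasU_gt0].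
- by move=> ?; apply: absz_lucasU_gt0; lia.
Qed.

Lemma lucasnomialK m : (m <= n)%N ->
  lucasnomial P Q n m * \prod_(1 <= i < m.+1) U i = \prod_(0 <= i < m) U (n - i).
Proof.
move=> le_mn; rewrite divzK // dvdzE !absz_prod.
apply: dvdn_from_log; rewrite ?prod_lucasU_gt0 ?prod_lucasU_falling_gt0 // => p.
by rewrite logn_lucas_falling // leq_addr.
Qed.

Lemma absz_lucasnomialK m : (m <= n)%N ->
  (`|lucasnomial P Q n m| * \prod_(1 <= i < m.+1) `|U i| = \prod_(0 <= i < m) `|U (n - i)|)%N.
Proof. by move=> le_mn; rewrite -!absz_prod -abszM lucasnomialK. Qed.

Lemma absz_lucasnomial_gt0 m : (m <= n)%N -> (0 < `|lucasnomial P Q n m|)%N.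
Proof.
move=> le_mn; have := prod_lucasU_falling_gt0 le_mn.
by rewrite -absz_lucasnomialK // muln_gt0 => /andP [].
Qed.

Lemma logn_lucasnomial p m : (m <= n)%N ->
  logn p `|lucasnomial P Q n m| = carries (e p) n m.
Proof.
move=> le_mn; have := logn_lucas_falling p le_mn.
by rewrite -absz_lucasnomialK // lognM ?absz_lucasnomial_gt0 ?prod_lucasU_gt0 //; lia.
Qed.

Lemma biglcm_lucasnomial k : (0 < k <= n)%N ->
  (\big[lcmn/1]_(m <- iota 1 k) `|lucasnomial P Q n m| * `|U n.+1| =
   \big[lcmn/1]_(i <- iota 0 k.+1) `|U (n.+1 - i)|)%N.
Proof.
move=> k_itv; have binom_gt0 m : m \in iota 1 k -> (0 < `|lucasnomial P Q n m|)%N.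
  by rewrite mem_iota => m_itv; apply: absz_lucasnomial_gt0; lia.
have top_gt0 i : i \in iota 0 k.+1 -> (0 < `|U (n.+1 - i)|)%N.
  by rewrite mem_iota => i_itv; apply: absz_lucasU_gt0; lia.
apply: eqn_from_log; rewrite ?muln_gt0 ?biglcmn_gt0 ?absz_lucasU_gt0 // => p.
rewrite lognM ?biglcmn_gt0 ?absz_lucasU_gt0 // !logn_biglcm //.
rewrite (eq_big_seq (carries (e p) n)) => [|m]; last first.
  by rewrite mem_iota => m_itv; apply: logn_lucasnomial; lia.
by rewrite max_carries // => a b /andP [a_gt0 _] /andP [b_gt0 _]; apply: logn_lucasU_gcd.
Qed.

End LucasnomialValuation.

Lemma exists_lucas_roots (F : closedFieldType) (P Q : int) :
  exists alpha beta : F, alpha + beta = P%:~R /\ alpha * beta = Q%:~R.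
Proof.
have [x x_root] := @solve_monicpoly F 2 (nth 0 [:: - Q%:~R; P%:~R]) isT.
rewrite !big_ord_recr big_ord0 /= add0r expr0 expr1 mulr1 in x_root.
by exists x, (P%:~R - x); rewrite addrC subrK mulrBr -expr2 x_root; split; last ring.
Qed.

Theorem corollary4 (P Q : int) :
  P != 0 -> Q != 0 -> coprimez P Q -> P ^+ 2 - 4 * Q != 0 ->
  (forall alpha beta : algC,
     alpha + beta = P%:~R -> alpha * beta = Q%:~R ->
     forall m : nat, (0 < m)%N -> (alpha / beta) ^+ m != 1) ->
  forall n k : nat, (0 < k)%N -> (k <= n)%N ->
    ((lcmz_seq [seq lucasnomial P Q n m | m <- iota 1 k])%:~R : rat)
    = (lcmz_seq [seq lucasU P Q (n.+1 - i)%N | i <- iota 0 k.+1])%:~R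
      / (`|lucasU P Q n.+1|)%:~R.
Proof.
(* P != 0 and P^2 - 4Q != 0 are implied by the last hypothesis, which excludes
   alpha / beta = -1 and alpha / beta = 1. *)
move=> _ Q_neq0 coPQ _ not_root n k k_gt0 le_kn.
have [alpha [beta [sum_ab prod_ab]]] := exists_lucas_roots algC P Q.
have beta_neq0 : beta != 0.
  apply: contraNneq Q_neq0 => beta0.
  by move: prod_ab; rewrite beta0 mulr0 => /esym/eqP; rewrite intr_eq0.
have US_neq0 := lucasUS_neq0 sum_ab prod_ab beta_neq0 (not_root _ _ sum_ab prod_ab).
have US_gt0 : (0 < `|lucasU P Q n.+1|)%N by rewrite absz_gt0.
rewrite !lcmz_seqE !big_map -(biglcm_lucasnomial coPQ US_neq0 (k := k)) ?k_gt0 //.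
by rewrite -!pmulrn natrM mulfK // pnatr_eq0 -lt0n.
Qed.
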